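(* Let $A$ and $B$ be self-adjoint operators on the same complex Hilbert space, with $B$ bounded, non-negative and $B \neq 0$. Then the set $\mathbb{R}\setminus\bigcup_{t\in\mathbb{R}}\sigma(A+tB)$ is at most countable.
   Context: $\sigma(T)$ denotes the spectrum of an operator $T$. $A$ may be unbounded; $A+tB$ is defined on the domain of $A$. *)

From HB Require Import structures.
From mathcomp Require Import all_boot all_order all_algebra.
From mathcomp Require Import complex.
From mathcomp Require Import boolp classical_sets cardinality reals.
Set Implicit Arguments. Unset Strict Implicit. Unset Printing Implicit Defensive.
Import Order.TTheory GRing.Theory Num.Theory.
Local Open Scope ring_scope.
Local Open Scope classical_set_scope.

Section Hilbert.
Variables (R : realType) (H : lmodType R[i]) (ip : H -> H -> R[i]).

Definition hnorm (x : H) : R := Num.sqrt (complex.Re (ip x x)).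

Definition hilbert_space : Prop :=
  [/\ (forall (a : R[i]) (x y z : H), ip (a *: x + y) z = a * ip x z + ip y z),
      (forall x y : H, ip y x = Num.conj (ip x y)),
      (forall x : H, 0 <= ip x x),
      (forall x : H, ip x x = 0 -> x = 0) &
      (forall u : nat -> H,
         (forall e : R, 0 < e -> exists N : nat, forall m n : nat,
             (N <= m)%N -> (N <= n)%N -> hnorm (u m - u n) < e) ->
         exists l : H, forall e : R, 0 < e -> exists N : nat, forall n : nat,
             (N <= n)%N -> hnorm (u n - l) < e)].

Definition linear_on (D : set H) (T : H -> H) : Prop :=
  [/\ D 0,
      (forall (a : R[i]) (x y : H), D x -> D y -> D (a *: x + y)) &
      (forall (a : R[i]) (x y : H), D x -> D y -> T (a *: x + y) = a *: T x + T y)].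

Definition dense (D : set H) : Prop :=
  forall (x : H) (e : R), 0 < e -> exists2 y, D y & hnorm (x - y) < e.

(* (possibly unbounded) self-adjoint operator T with domain D:
   densely defined, linear, and T^* = T including equality of domains, i.e.
   y is in dom(T^* ) with T^* y = z  iff  y \in D and z = T y. *)
Definition selfadjoint (D : set H) (T : H -> H) : Prop :=
  [/\ linear_on D T, dense D &
      (forall y z : H, (forall x, D x -> ip (T x) y = ip x z) <-> (D y /\ z = T y))].

Definition bounded_op (T : H -> H) : Prop :=
  linear_on setT T /\ exists C : R, forall x, hnorm (T x) <= C * hnorm x.

Definition nonneg_op (T : H -> H) : Prop := forall x, 0 <= ip (T x) x.

(* lam belongs to the spectrum of the operator T with domain D iff
   T - lam is not boundedly invertible, i.e. there is no bounded
   everywhere-defined S mapping H into D with (T - lam) S = id_H and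
   S (T - lam) = id_D. *)
Definition spectrum (D : set H) (T : H -> H) : set R[i] :=
  [set lam | ~ exists S : H -> H,
      [/\ bounded_op S, (forall y, D (S y)),
          (forall y, T (S y) - lam *: S y = y) &
          (forall x, D x -> S (T x - lam *: x) = x)]].

End Hilbert.

From HB Require Import structures.
From mathcomp Require Import all_boot all_order all_algebra.
From mathcomp Require Import complex.
From mathcomp Require Import boolp classical_sets cardinality reals.
From mathcomp Require Import ring lra.
Set Implicit Arguments.
Unset Strict Implicit.
Unset Printing Implicit Defensive.
Import Order.TTheory GRing.Theory Num.Theory.
Local Open Scope ring_scope.
Local Open Scope classical_set_scope.
Local Open Scope complex_scope.

(* Let s lie outside every spectrum of A + tB and let Rs = (A - s)^-1.  The real
   quadratic form q(x) = <Rs B x, B x> vanishes: otherwise let M > 0 be the best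
   constant in |q(x)| <= M <B x, x> and x a near-maximiser of sg q(x) on <B x, x> <= 1,
   for a sign sg.  For t = -sg/M the vector z = x + t Rs B x has <B z, z> = O(e), so
   (A + tB - s) Rs B x = B z is small while Rs B x is not, and A + tB - s has no bounded
   inverse.  For two such points s <> s' and B x0 <> 0, the resolvent identity together
   with q_s(x0) = q_s'(x0) = 0 forces |s - s'| >= 1 / ||Rs||: the set is discrete in R,
   hence countable. *)

Section SymmetricForm.
Variables (R : rcfType) (V : lmodType R[i]).

Definition symform (f : V -> V -> R) :=
  [/\ forall x y z, f (x + y) z = f x z + f y z,
      forall (r : R) x z, f (r%:C *: x) z = r * f x z &
      forall x y, f x y = f y x].

Variable f : V -> V -> R.
Hypothesis f_symform : symform f.

Lemma symformDl x y z : f (x + y) z = f x z + f y z.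
Proof. by case: f_symform. Qed.

Lemma symformZl r x z : f (r%:C *: x) z = r * f x z.
Proof. by case: f_symform. Qed.

Lemma symformC x y : f x y = f y x.
Proof. by case: f_symform. Qed.

Lemma symformZr r x z : f x (r%:C *: z) = r * f x z.
Proof. by rewrite symformC symformZl symformC. Qed.

Lemma symform0l z : f 0 z = 0.
Proof. by apply: (@addrI _ (f 0 z)); rewrite -symformDl !addr0. Qed.

Lemma symformBl x y z : f (x - y) z = f x z - f y z.
Proof.
by apply: (@addrI _ (f y z)); rewrite -symformDl addrC subrK addrC subrK.
Qed.

Lemma symformBr x y z : f z (x - y) = f z x - f z y.
Proof. by rewrite symformC symformBl !(symformC z). Qed.

Lemma symform_quad a b x y :
  f (a%:C *: x + b%:C *: y) (a%:C *: x + b%:C *: y) =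
  a ^+ 2 * f x x + 2 * a * b * f x y + b ^+ 2 * f y y.
Proof.
rewrite !symformDl !(symformC _ (_ + _)) !symformDl !symformZl.
by rewrite !(symformC _ (_ *: _)) !symformZl (symformC y x); ring.
Qed.

Lemma symform_shift r x y :
  f (x + r%:C *: y) (x + r%:C *: y) = f x x + 2 * r * f x y + r ^+ 2 * f y y.
Proof.
have := symform_quad 1 r x y.
by rewrite -[1%:C]/(1 : R[i]) scale1r expr1n mulr1 !mul1r.
Qed.

Lemma symformZZ r x : f (r%:C *: x) (r%:C *: x) = r ^+ 2 * f x x.
Proof. by rewrite symformZl symformZr mulrA expr2. Qed.

Hypothesis f_ge0 : forall x, 0 <= f x x.

Lemma symform_cauchy_schwarz x y : f x y ^+ 2 <= f x x * f y y.
Proof.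
have quad_ge0 a b : 0 <= a ^+ 2 * f x x + 2 * a * b * f x y + b ^+ 2 * f y y.
  by rewrite -symform_quad.
have [yy0 | yy_neq0] := eqVneq (f y y) 0.
  have := quad_ge0 (f x y) (- (f x x + 1) / 2).
  rewrite yy0 mulr0; have := f_ge0 x; nra.
have yy_gt0 : 0 < f y y by rewrite lt_def yy_neq0 f_ge0.
have := quad_ge0 (f y y) (- f x y); nra.
Qed.

End SymmetricForm.

Section TwoForms.
Variables (R : rcfType) (V : lmodType R[i]) (p q : V -> V -> R).
Hypotheses (p_symform : symform p) (q_symform : symform q).
Hypothesis p_ge0 : forall x, 0 <= p x x.

Lemma symform_le_unit_ball (M : R) :
  (forall x, p x x = 0 -> q x x = 0) ->
  (forall x, p x x <= 1 -> `|q x x| <= M) ->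
  forall x, `|q x x| <= M * p x x.
Proof.
move=> q0 qM x; have [px0 | px_neq0] := eqVneq (p x x) 0.
  by rewrite px0 q0 // normr0 mulr0.
have px_gt0 : 0 < p x x by rewrite lt_def px_neq0 p_ge0.
set r := Num.sqrt (p x x)^-1.
have r2 : r ^+ 2 = (p x x)^-1 by rewrite sqr_sqrtr // invr_ge0 ltW.
have := qM (r%:C *: x).
rewrite (symformZZ q_symform) (symformZZ p_symform) r2 mulVf // => /(_ (lexx _)).
rewrite normrM ger0_norm ?invr_ge0 ?(ltW px_gt0) //.
by rewrite (ler_pdivrMl _ _ px_gt0) mulrC.
Qed.

Lemma symform_polar_le (M : R) : (forall x, `|q x x| <= M * p x x) ->
  forall u v, 2 * q u v <= M * (p u u + p v v).
Proof.
move=> qM u v.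
have := qM (u + 1%:C *: v); have := qM (u + (-1)%:C *: v).
rewrite !(symform_shift q_symform) !(symform_shift p_symform) !ler_norml.
by move=> /andP[+ _] /andP[_ +]; nra.
Qed.

End TwoForms.

Lemma ler_norm_of_sqr (R : realDomainType) (a b : R) :
  0 <= b -> a ^+ 2 <= b ^+ 2 -> `|a| <= b.
Proof. by move=> b_ge0; rewrite -real_normK ?num_real // ler_sqr ?nnegrE. Qed.

Lemma sqr_le_mul_le (R : realDomainType) (a b : R) :
  0 <= a -> 0 <= b -> a ^+ 2 <= b * a -> a <= b.
Proof.
move=> a_ge0 b_ge0; have [-> // | a_neq0] := eqVneq a 0.
by rewrite expr2 ler_pM2r // lt_def a_neq0.
Qed.

(* Witness: e = M^3 / (4 (|K| + M^2)), so that e <= M / 4 and K e <= M^3 / 4. *)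
Lemma small_defect_le0 (R : realFieldType) (M K : R) :
  (forall e, 0 < e -> e <= M -> M * (M - e) ^+ 2 <= K * e) -> M <= 0.
Proof.
move=> small; rewrite leNgt; apply/negP => M_gt0.
set k := `|K| + M ^+ 2.
have M2_gt0 : 0 < M ^+ 2 by rewrite exprn_gt0.
have k_gt0 : 0 < k by rewrite ltr_wpDl.
set e := M ^+ 3 / (4 * k).
have e_gt0 : 0 < e by rewrite divr_gt0 ?exprn_gt0 ?mulr_gt0.
have ek : 4 * k * e = M ^+ 3 by rewrite /e mulrCA mulfV ?mulr1 // gt_eqF ?mulr_gt0.
have e_le : 4 * e <= M.
  rewrite -(ler_pM2r M2_gt0); have := normr_ge0 K; rewrite /k in ek; nra.
have Ke : K * e <= `|K| * e by rewrite ler_pM2r // ler_norm.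
have eM2 : 4 * e * M ^+ 2 <= M * M ^+ 2 by rewrite ler_pM2r.
have := small e e_gt0 ltac:(lra); rewrite /k in ek; nra.
Qed.

Lemma countable_isolated (R : realType) (S : set R) :
  (forall s, S s -> exists2 d, 0 < d & forall s', S s' -> s' != s -> d <= `|s' - s|) ->
  countable S.
Proof.
move=> isolated.
have /choice[d dP] : forall s, exists d : R,
    S s -> 0 < d /\ forall s', S s' -> s' != s -> d <= `|s' - s|.
  move=> s; have [/isolated[d d_gt0 dP] | nSs] := pselect (S s).
    by exists d.
  by exists 0 => /nSs.
have /choice[q qP] : forall s, exists q : rat,
    S s -> s - d s / 2 < ratr q /\ ratr q < s + d s / 2.
  move=> s; have [Ss | nSs] := pselect (S s); last by exists 0 => /nSs.
  have lt_ends : s - d s / 2 < s + d s / 2 by have := (dP s Ss).1; lra.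
  have [q] := rat_in_itvoo lt_ends.
  by rewrite in_itv /= => /andP[]; exists q.
apply/countable_injP; exists (pickle \o q) => s s'; rewrite !in_setE => Ss Ss'.
move=> /(pcan_inj pickleK) qE; apply: contrapT => /eqP s_neq_s'.
have s'_neq_s : s' != s by rewrite eq_sym.
have [d_gt0 /(_ s' Ss' s'_neq_s)] := dP s Ss.
have [d'_gt0 /(_ s Ss s_neq_s')] := dP s' Ss'.
have := qP s Ss; have := qP s' Ss'; rewrite qE.
rewrite distrC !ler_normr !opprB; lra.
Qed.

Section LinearOn.
Variables (R : realType) (H : lmodType R[i]) (T : H -> H).

Lemma linear_on0 (D : set H) : linear_on D T -> T 0 = 0.
Proof.
case=> D0 _ /(_ (-1) 0 0 D0 D0).
by rewrite !scaleN1r oppr0 addr0 addNr.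
Qed.

Lemma linear_onT_D : linear_on setT T -> forall x y, T (x + y) = T x + T y.
Proof. by case=> _ _ T_lin x y; rewrite -[x]scale1r T_lin // !scale1r. Qed.

Lemma linear_onT_Z : linear_on setT T -> forall a x, T (a *: x) = a *: T x.
Proof.
move=> T_linT a x; have := linear_on0 T_linT; case: T_linT => _ _ T_lin T0.
by rewrite -[a *: x]addr0 T_lin // T0 addr0.
Qed.

End LinearOn.

Section RealInnerProduct.
Variables (R : realType) (H : lmodType R[i]) (ip : H -> H -> R[i]).
Hypothesis ip_lin : forall (a : R[i]) (x y z : H), ip (a *: x + y) z = a * ip x z + ip y z.
Hypothesis ip_sym : forall x y : H, ip y x = Num.conj (ip x y).
Hypothesis ip_ge0 : forall x : H, 0 <= ip x x.
Hypothesis ip_eq0 : forall x : H, ip x x = 0 -> x = 0.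

Definition reip (x y : H) : R := complex.Re (ip x y).

Lemma reip_symform : symform reip.
Proof.
split=> [x y z | r x z | x y]; rewrite /reip.
- by rewrite -{1}[x]scale1r ip_lin mul1r; case: (ip x z) (ip y z) => ? ? [].
- rewrite -[_ *: x]addr0 ip_lin.
  have -> : ip 0 z = 0.
    have := ip_lin 1 0 0 z; rewrite scaler0 addr0 mul1r.
    by move/(congr1 (fun w => w - ip 0 z)); rewrite subrr addrK.
  by rewrite addr0; case: (ip x z) => a b /=; ring.
- by rewrite ip_sym; case: (ip y x).
Qed.

Lemma reip_ge0 x : 0 <= reip x x.
Proof. by have := ip_ge0 x; rewrite lecE => /andP[]. Qed.

Lemma reip_eq0 x : reip x x = 0 -> x = 0.
Proof.
move=> re0; apply: ip_eq0; have := ip_ge0 x; rewrite lecE /= => /andP[/eqP im0 _].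
by move: re0 im0; rewrite /reip; case: (ip x x) => a b /= -> ->.
Qed.

Lemma reip_le_of_hnorm_le (C : R) x y :
  hnorm ip y <= C * hnorm ip x -> reip y y <= C ^+ 2 * reip x x.
Proof.
rewrite /hnorm -/(reip y y) -/(reip x x) => le_norm.
rewrite -(sqr_sqrtr (reip_ge0 y)) -(sqr_sqrtr (reip_ge0 x)).
have := sqrtr_ge0 (reip y y); have := sqrtr_ge0 (reip x x); nra.
Qed.

Lemma nonneg_op_reip (T : H -> H) : nonneg_op ip T -> forall x, 0 <= reip (T x) x.
Proof. by move=> T_ge0 x; have := T_ge0 x; rewrite lecE => /andP[]. Qed.

End RealInnerProduct.

Lemma selfadjoint_sym (R : realType) (H : lmodType R[i]) (ip : H -> H -> R[i])
    (D : set H) (T : H -> H) :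
  selfadjoint ip D T -> forall x y, D x -> D y -> ip (T x) y = ip x (T y).
Proof. by case=> _ _ T_adj x y Dx Dy; apply: (proj2 (T_adj y (T y))). Qed.

Section Pencil.
Variables (R : realType) (H : lmodType R[i]) (ip : H -> H -> R[i]).
Hypothesis ip_lin : forall (a : R[i]) (x y z : H), ip (a *: x + y) z = a * ip x z + ip y z.
Hypothesis ip_sym : forall x y : H, ip y x = Num.conj (ip x y).
Hypothesis ip_ge0 : forall x : H, 0 <= ip x x.
Hypothesis ip_eq0 : forall x : H, ip x x = 0 -> x = 0.
Variables (D : set H) (A B : H -> H).
Hypothesis A_lin : linear_on D A.
Hypothesis A_sym : forall x y, D x -> D y -> ip (A x) y = ip x (A y).
Hypothesis B_lin : linear_on setT B.
Hypothesis B_sym : forall x y, ip (B x) y = ip x (B y).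
Variable CB : R.
Hypothesis B_bd : forall x, hnorm ip (B x) <= CB * hnorm ip x.
Hypothesis B_ge0 : forall x, 0 <= reip ip (B x) x.

Local Notation reip := (reip ip).
Local Notation hnorm := (hnorm ip).
Let reip_sf : symform reip := reip_symform ip_lin ip_sym.
Let reip_ge0 : forall x, 0 <= reip x x := reip_ge0 ip_ge0.

Definition pencil (t : R) (x : H) : H := A x + t%:C *: B x.

Lemma pencil0 : pencil 0 = A.
Proof. by apply/funext => x; rewrite /pencil scale0r addr0. Qed.

Definition resolvent_of (T : H -> H) (lam : R[i]) (S : H -> H) :=
  [/\ bounded_op ip S, forall y, D (S y), forall y, T (S y) - lam *: S y = y &
      forall x, D x -> S (T x - lam *: x) = x].

Lemma resolvent_of_not_spectrum T lam : ~ spectrum ip D T lam -> exists S, resolvent_of T lam S.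
Proof. exact: contrapT. Qed.

Definition Bform (x y : H) : R := reip (B x) y.

Let Bform_ge0 x : 0 <= Bform x x := B_ge0 x.

Lemma Bform_symform : symform Bform.
Proof.
split=> [x y z | r x z | x y]; rewrite /Bform.
- by rewrite linear_onT_D // (symformDl reip_sf).
- by rewrite linear_onT_Z // (symformZl reip_sf).
- by rewrite (symformC reip_sf (B y)) -[LHS]/(complex.Re (ip (B x) y)) B_sym.
Qed.

Lemma Bform_le_reip y : Bform y y <= `|CB| * reip y y.
Proof.
have cs := symform_cauchy_schwarz reip_sf reip_ge0 (B y) y.
have By_le : reip (B y) (B y) <= CB ^+ 2 * reip y y := reip_le_of_hnorm_le ip_ge0 (B_bd y).
apply: (le_trans (ler_norm _)); apply: ler_norm_of_sqr.
  by rewrite mulr_ge0.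
by rewrite exprMn real_normK ?num_real // expr2 mulrA; apply: le_trans cs _; rewrite ler_wpM2r.
Qed.

Lemma reipB_le_Bform x : reip (B x) (B x) <= `|CB| * Bform x x.
Proof.
apply: sqr_le_mul_le; [exact: reip_ge0 | exact: mulr_ge0 (normr_ge0 _) (B_ge0 x) |].
have cs := symform_cauchy_schwarz Bform_symform B_ge0 x (B x).
apply: le_trans cs _; rewrite [X in _ <= X]mulrAC [X in _ <= X]mulrC.
by apply: ler_wpM2l; [exact: B_ge0 | exact: Bform_le_reip].
Qed.

Section Resolvent.
Variables (s : R) (Rs : H -> H).
Hypothesis Rs_res : resolvent_of A s%:C Rs.

Let Rs_lin : linear_on setT Rs. Proof. by case: Rs_res => [[]]. Qed.
Let Rs_D y : D (Rs y). Proof. by case: Rs_res. Qed.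
Let Rs_eq y : A (Rs y) - s%:C *: Rs y = y. Proof. by case: Rs_res. Qed.

Lemma resolvent_reip_sym a b : reip (Rs a) b = reip a (Rs b).
Proof.
rewrite -{1}(Rs_eq b) -{2}(Rs_eq a) (symformBr reip_sf) (symformBl reip_sf).
rewrite (symformZr reip_sf) (symformZl reip_sf); congr (_ - _).
by rewrite -[RHS]/(complex.Re (ip (A (Rs a)) (Rs b))) A_sym.
Qed.

Lemma resolvent_inj y : Rs y = 0 -> y = 0.
Proof. by move=> Rs_y0; rewrite -(Rs_eq y) Rs_y0 (linear_on0 A_lin) scaler0 subr0. Qed.

Definition BRBform (x y : H) : R := reip (Rs (B x)) (B y).

Lemma BRBform_symform : symform BRBform.
Proof.
split=> [x y z | r x z | x y]; rewrite /BRBform.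
- by rewrite !linear_onT_D // (symformDl reip_sf).
- by rewrite !linear_onT_Z // (symformZl reip_sf).
- by rewrite resolvent_reip_sym (symformC reip_sf).
Qed.

Lemma BRBform_bound : exists2 C, 0 <= C & forall x, `|BRBform x x| <= C * Bform x x.
Proof.
have [[_ [CR Rs_bd]] _ _ _] := Rs_res.
exists (`|CR| * `|CB|); first by rewrite mulr_ge0.
move=> x; set y := Rs (B x).
have cs := symform_cauchy_schwarz reip_sf reip_ge0 y (B x).
have y_le : reip y y <= CR ^+ 2 * reip (B x) (B x) := reip_le_of_hnorm_le ip_ge0 (Rs_bd _).
have le_CR : `|BRBform x x| <= `|CR| * reip (B x) (B x).
  apply: ler_norm_of_sqr; first by rewrite mulr_ge0.
  rewrite exprMn real_normK ?num_real // expr2 mulrA.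
  by apply: le_trans cs _; rewrite ler_wpM2r.
apply: le_trans le_CR _; rewrite -mulrA ler_wpM2l //; exact: reipB_le_Bform.
Qed.

Lemma Bform_resolvent_le (M : R) : 0 < M ->
  (forall x, `|BRBform x x| <= M * Bform x x) ->
  forall x, Bform (Rs (B x)) (Rs (B x)) <= M ^+ 2 * Bform x x.
Proof.
move=> M_gt0 BRB_le x; set y := Rs (B x).
have := symform_polar_le Bform_symform BRBform_symform BRB_le (M%:C *: x) y.
rewrite (symformZZ Bform_symform) (symformZl BRBform_symform).
have -> : BRBform x y = Bform y y by rewrite /BRBform (symformC reip_sf).
have := Bform_ge0 x; have := Bform_ge0 y => By_ge0 Bx_ge0 polar.
have : 2 * M * Bform y y <= 2 * M * (M ^+ 2 * Bform x x) by nra.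
by rewrite ler_pM2l // mulr_gt0.
Qed.

Lemma pencil_resolvent t x :
  pencil t (Rs (B x)) - s%:C *: Rs (B x) = B (x + t%:C *: Rs (B x)).
Proof. by rewrite /pencil addrAC Rs_eq (linear_onT_D B_lin) (linear_onT_Z B_lin). Qed.

Lemma Bform_shift_le (M sg t e : R) x : 0 < M -> sg ^+ 2 = 1 -> M * t = - sg ->
  (forall x, `|BRBform x x| <= M * Bform x x) ->
  Bform x x <= 1 -> M - e < sg * BRBform x x ->
  M * Bform (x + t%:C *: Rs (B x)) (x + t%:C *: Rs (B x)) <= 2 * e.
Proof.
move=> M_gt0 sg2 Mt BRB_le x_le1 near_max.
set y := Rs (B x); set z := x + t%:C *: y.
have y_le := Bform_resolvent_le M_gt0 BRB_le x; rewrite -/y in y_le.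
have z_eq : Bform z z = Bform x x + 2 * t * BRBform x x + t ^+ 2 * Bform y y.
  by rewrite /z (symform_shift Bform_symform) /Bform [reip (B x) y](symformC reip_sf).
have M2z : M ^+ 2 * Bform z z =
    M ^+ 2 * Bform x x - 2 * M * (sg * BRBform x x) + sg ^+ 2 * Bform y y.
  by rewrite z_eq -[sg]opprK -Mt; ring.
rewrite sg2 mul1r in M2z.
have x_ge0 := Bform_ge0 x.
have : M * (M * Bform z z) <= M * (2 * e) by rewrite mulrA -expr2 M2z; nra.
by rewrite ler_pM2l.
Qed.

Lemma BRBform_sqr_le x :
  BRBform x x ^+ 2 <= `|CB| * Bform x x * reip (Rs (B x)) (Rs (B x)).
Proof.
apply: le_trans (symform_cauchy_schwarz reip_sf reip_ge0 (Rs (B x)) (B x)) _.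
rewrite mulrC ler_wpM2r //; exact: reipB_le_Bform.
Qed.

(* [Rs (B x)] is an approximate null vector of [pencil t - s]: its image [B z] is
   small, by [Bform_shift_le], while its own norm is bounded below by [|BRBform x x|]. *)
Lemma pencil_spectrum (M sg : R) : 0 < M -> sg ^+ 2 = 1 ->
  (forall x, `|BRBform x x| <= M * Bform x x) ->
  (forall e, 0 < e -> exists2 x, Bform x x <= 1 & M - e < sg * BRBform x x) ->
  spectrum ip D (pencil (- (sg / M))) s%:C.
Proof.
move=> M_gt0 sg2 BRB_le near_max [S [[_ [CS S_bd]] _ _ S_inv]].
suff /small_defect_le0 : forall e, 0 < e -> e <= M ->
    M * (M - e) ^+ 2 <= (`|CB| ^+ 2 * CS ^+ 2 * 2) * e.
  by rewrite leNgt M_gt0.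
move=> e e_gt0 e_le; have [x x_le1 near] := near_max e e_gt0.
have Mt : M * - (sg / M) = - sg by rewrite mulrN mulrCA divff ?gt_eqF // mulr1.
have := Bform_shift_le M_gt0 sg2 Mt BRB_le x_le1 near.
set y := Rs (B x); set z := x + _ *: y => Mz_le.
have y_le : reip y y <= CS ^+ 2 * reip (B z) (B z).
  have SBz : S (B z) = y by rewrite /z /y -pencil_resolvent S_inv.
  by apply: (reip_le_of_hnorm_le ip_ge0); rewrite -{1}SBz S_bd.
have Bz_le := reipB_le_Bform z.
have q_le := BRBform_sqr_le x; rewrite -/y in q_le.
have e_sqr : (M - e) ^+ 2 <= BRBform x x ^+ 2.
  rewrite -[BRBform x x ^+ 2]mul1r -sg2 -exprMn ler_sqr ?nnegrE; lra.
have y_ge0 := reip_ge0 y.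
have q2_le : BRBform x x ^+ 2 <= `|CB| ^+ 2 * CS ^+ 2 * Bform z z.
  have -> : `|CB| ^+ 2 * CS ^+ 2 * Bform z z = `|CB| * (CS ^+ 2 * (`|CB| * Bform z z)).
    by ring.
  apply: le_trans q_le _; rewrite -mulrA ler_wpM2l //.
  apply: le_trans (ler_piMl y_ge0 x_le1) _; apply: le_trans y_le _.
  by rewrite ler_wpM2l ?sqr_ge0.
have CC := mulr_ge0 (sqr_ge0 `|CB|) (sqr_ge0 CS).
have := ler_wpM2l (ltW M_gt0) (le_trans e_sqr q2_le).
have := ler_wpM2l CC Mz_le.
nra.
Qed.

Lemma BRBform_extremal : exists M sg, [/\ sg ^+ 2 = 1,
  forall x, `|BRBform x x| <= M * Bform x x &
  forall e, 0 < e -> exists2 x, Bform x x <= 1 & M - e < sg * BRBform x x].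
Proof.
have [C C_ge0 BRB_le] := BRBform_bound.
pose values sg := [set sg * BRBform x x | x in [set x | Bform x x <= 1]].
have values_sup sg : sg ^+ 2 = 1 -> has_sup (values sg).
  move=> sg2; split.
    by exists (sg * BRBform 0 0), 0; rewrite //= (symform0l Bform_symform).
  exists C => _ [x /= x_le1 <-]; apply: le_trans (ler_norm _) _.
  rewrite normrM -[`|sg|]sqrtr_sqr sg2 sqrtr1 mul1r.
  by apply: le_trans (BRB_le x) _; rewrite ler_piMr.
have values_ub sg x : sg ^+ 2 = 1 -> Bform x x <= 1 -> sg * BRBform x x <= sup (values sg).
  by move=> sg2 x_le1; apply: sup_upper_bound (values_sup _ sg2) _ _; exists x.
set M := Num.max (sup (values 1)) (sup (values (-1))).
have BRB0 x : Bform x x = 0 -> BRBform x x = 0.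
  move=> x0; apply/eqP; rewrite -normr_le0; apply: le_trans (BRB_le x) _.
  by rewrite x0 mulr0.
have BRB_le_ball x : Bform x x <= 1 -> `|BRBform x x| <= M.
  move=> x_le1; rewrite ler_norml; apply/andP; split.
    rewrite lerNl -mulN1r (le_trans (values_ub _ _ _ x_le1)) ?sqrrN ?expr1n //.
    by rewrite le_max lexx orbT.
  by rewrite -[BRBform x x]mul1r (le_trans (values_ub _ _ _ x_le1)) ?le_max ?lexx ?expr1n.
have [sg sg2 M_sup] : exists2 sg : R, sg ^+ 2 = 1 & M = sup (values sg).
  by rewrite /M; case: leP => _; [exists (-1) | exists 1]; rewrite ?sqrrN ?expr1n.
have := symform_le_unit_ball Bform_symform BRBform_symform Bform_ge0 BRB0 BRB_le_ball.
exists M, sg; split=> // e e_gt0.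
have [_ [x x_le1 <-] near] := sup_adherent e_gt0 (values_sup sg sg2).
by exists x; rewrite // M_sup.
Qed.

Lemma BRBform_eq0 : (forall t, ~ spectrum ip D (pencil t) s%:C) ->
  forall x, BRBform x x = 0.
Proof.
move=> regular; have [M [sg [sg2 BRB_le near_max]]] := BRBform_extremal.
suff M_le0 : M <= 0.
  move=> x; apply/eqP; rewrite -normr_le0 (le_trans (BRB_le x)) //.
  exact: mulr_le0_ge0.
rewrite leNgt; apply/negP => M_gt0.
exact: regular _ (pencil_spectrum M_gt0 sg2 BRB_le near_max).
Qed.

End Resolvent.

Lemma resolvent_identity (lam lam' : R[i]) Rs Rs' y :
  resolvent_of A lam Rs -> resolvent_of A lam' Rs' ->
  Rs' y - Rs y = (lam' - lam) *: Rs (Rs' y).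
Proof.
case=> [[Rs_lin _]] _ _ Rs_inv [_ Rs'_D Rs'_eq _].
have Ab : A (Rs' y) - lam *: Rs' y = y + (lam' - lam) *: Rs' y.
  move: (Rs'_eq y) => /(congr1 (fun v => v + (lam' - lam) *: Rs' y)) <-.
  by rewrite scalerBl addrA subrK.
have := Rs_inv _ (Rs'_D y); rewrite Ab (linear_onT_D Rs_lin) (linear_onT_Z Rs_lin).
by move=> {1}<-; rewrite addrAC subrr add0r.
Qed.

Lemma resolvent_gap (s s' CR : R) Rs Rs' x0 :
  resolvent_of A s%:C Rs -> resolvent_of A s'%:C Rs' ->
  (forall v, hnorm (Rs v) <= CR * hnorm v) ->
  BRBform Rs x0 x0 = 0 -> BRBform Rs' x0 x0 = 0 -> B x0 != 0 -> s != s' ->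
  1 <= `|s' - s| * `|CR|.
Proof.
move=> Rs_res Rs'_res Rs_bd q0 q0' Bx0 s_neq_s'.
rewrite /BRBform in q0 q0'; set w := B x0 in q0 q0' Bx0.
set u := Rs' w in q0' *; set d := s' - s.
have res_id : u - Rs w = d%:C *: Rs u.
  by rewrite /u (resolvent_identity _ Rs_res Rs'_res) rmorphB.
have Rsu_w : reip (Rs u) w = 0.
  have : d * reip (Rs u) w = 0.
    by rewrite -(symformZl reip_sf) -res_id (symformBl reip_sf) q0 q0' subrr.
  by move/eqP; rewrite mulf_eq0 subr_eq0 eq_sym (negbTE s_neq_s') => /eqP.
have uu : reip u u = d * reip u (Rs u).
  move: Rsu_w; rewrite (resolvent_reip_sym Rs_res) (_ : Rs w = u - d%:C *: Rs u).
    by rewrite (symformBr reip_sf) (symformZr reip_sf) => /eqP; rewrite subr_eq0 => /eqP.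
  by rewrite -res_id opprB addrC subrK.
have uu_gt0 : 0 < reip u u.
  rewrite lt_def reip_ge0 andbT; apply: contra Bx0 => /eqP/(reip_eq0 ip_ge0 ip_eq0).
  by move/(resolvent_inj Rs'_res) ->.
have cs := symform_cauchy_schwarz reip_sf reip_ge0 u (Rs u).
have Rsu_le : reip (Rs u) (Rs u) <= CR ^+ 2 * reip u u := reip_le_of_hnorm_le ip_ge0 (Rs_bd u).
have : 1 * reip u u ^+ 2 <= (`|d| * `|CR|) ^+ 2 * reip u u ^+ 2.
  rewrite mul1r {1}uu !exprMn !real_normK ?num_real // -[X in _ <= X]mulrA.
  apply: ler_wpM2l; first exact: sqr_ge0.
  apply: le_trans cs _; rewrite mulrC expr2 mulrA.
  by apply: ler_wpM2r => //; exact: ltW.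
rewrite ler_pM2r ?exprn_gt0 //; have := mulr_ge0 (normr_ge0 d) (normr_ge0 CR); nra.
Qed.

Lemma regular_points_countable x0 : B x0 != 0 ->
  countable [set s : R | forall t, ~ spectrum ip D (pencil t) s%:C].
Proof.
move=> Bx0; apply: countable_isolated => s regular.
have resolvent r : (forall t, ~ spectrum ip D (pencil t) r%:C) ->
    exists Rs, resolvent_of A r%:C Rs.
  by move/(_ 0); rewrite pencil0 => /resolvent_of_not_spectrum.
have [Rs Rs_res] := resolvent s regular; have [[_ [CR Rs_bd]] _ _ _] := Rs_res.
exists (`|CR| + 1)^-1 => [|s' regular' s'_neq_s]; first by rewrite invr_gt0 ltr_wpDl.
have [Rs' Rs'_res] := resolvent s' regular'.
have := resolvent_gap Rs_res Rs'_res Rs_bd (BRBform_eq0 Rs_res regular x0)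
  (BRBform_eq0 Rs'_res regular' x0) Bx0 ltac:(by rewrite eq_sym).
rewrite -[_^-1]mul1r ler_pdivrMr ?ltr_wpDl // => /le_trans; apply.
by rewrite ler_wpM2l // lerDl.
Qed.

End Pencil.

Theorem lemma2p7 (R : realType) (H : lmodType R[i]) (ip : H -> H -> R[i])
  (hH : hilbert_space ip) (D : set H) (A B : H -> H)
  (hA : selfadjoint ip D A)
  (hBsa : selfadjoint ip setT B) (hBb : bounded_op ip B)
  (hBpos : nonneg_op ip B) (hB0 : exists x, B x != 0) :
  countable [set s : R | forall t : R,
     ~ spectrum ip D (fun x => A x + (Complex t 0) *: B x) (Complex s 0)].
Proof.
have [ip_lin ip_sym ip_ge0 ip_eq0 _] := hH.
have [A_lin _ _] := hA; have [B_lin _ _] := hBsa.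
have [[_ [CB B_bd]] [x0 Bx0]] := (hBb, hB0).
have B_sym x y : ip (B x) y = ip x (B y) by exact: selfadjoint_sym hBsa x y I I.
exact: (regular_points_countable ip_lin ip_sym ip_ge0 ip_eq0 A_lin
  (selfadjoint_sym hA) B_lin B_sym B_bd (nonneg_op_reip hBpos) Bx0).
Qed.
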